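(* Let $U$ be a countably infinite universe and $\mathcal{C}=(L_1,L_2,\ldots)$ a countably infinite collection of languages over $U$, and let $m^\star(L_j)$ be the values computed by the Procedure described in the context. Suppose that for every $t\in\mathbb{N}$, the set $\{j: m^\star(L_j)+1\le t\}$ is finite. Then there exists an algorithm that non-uniformly generates from $\mathcal{C}$ with generation times forming a Pareto-optimal sequence.
   Context: A language is an infinite subset of $U$. A collection is a sequence of languages; repetitions are allowed and entries are distinguished by their index. An enumeration of a language $L$ is a sequence $x_1,x_2,\ldots$ with every $x_t\in L$ and every $x\in L$ equal to some $x_t$. A generating algorithm at each time $t\ge1$ receives $x_1,\ldots,x_t$ and outputs $z_t\in U$; $S_t$ is the set of distinct strings among $x_1,\ldots,x_t$. An algorithm non-uniformly generates from $\mathcal{C}$ with (finite) generation times $t(L_i)$ if for every $i$ and every enumeration of $L_i$, $z_t\in L_i\setminus S_t$ whenever $|S_t|\ge t(L_i)$. For an algorithm $\mathcal{G}$, $t_{\mathcal{G}}(L_i)$ denotes the least such value for $L_i$ ($\infty$ if none). A sequence $t(L_1),t(L_2),\ldots$ is Pareto-optimal if every algorithm $\mathcal{G}$ that non-uniformly generates from $\mathcal{C}$ and satisfies $t_{\mathcal{G}}(L_i)<t(L_i)$ for some $i$ also satisfies $t_{\mathcal{G}}(L_j)>t(L_j)$ for some other $j$. Procedure. Set $\mathcal{C}'_0=()$. For $i=1,2,3,\ldots$: append the entry $L_i$ at the end of $\mathcal{C}'_{i-1}$ to get $\mathcal{C}'_i=(L'_1,\ldots,L'_i)$, and set $j=i$.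 Repeat: (1) among all subcollections $\mathcal{D}$ of the entries $(L'_1,\ldots,L'_j)$ that include the entry $L'_j$ and satisfy $|\bigcap_{L\in\mathcal{D}}L|<\infty$, let $m_{\mathrm{chk}}$ be the maximum of $|\bigcap_{L\in\mathcal{D}}L|$ and $\mathcal{C}_{\mathrm{chk}}$ a maximizer; if no such $\mathcal{D}$ exists, set $\mathcal{C}_{\mathrm{chk}}=()$, $m_{\mathrm{chk}}=0$. (2) If $j\le1$ or $m_{\mathrm{chk}}>m^\star(L'_{j-1})$ (already fixed since $L'_{j-1}$ has original index $<i$), stop the loop. (3) Otherwise swap positions $j-1$ and $j$ in $\mathcal{C}'_i$, set $j\leftarrow j-1$ and return to (1). When the loop stops, set $\mathcal{C}(L_i)=\mathcal{C}_{\mathrm{chk}}$ and $m^\star(L_i)=m_{\mathrm{chk}}$. *)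

From Stdlib Require Import ClassicalEpsilon.
From mathcomp Require Import all_boot.

Set Implicit Arguments.
Unset Strict Implicit.
Unset Printing Implicit Defensive.

Section Defs.
Variable U : countType.

Definition card_is (A : U -> Prop) (n : nat) : Prop :=
  exists s : seq U, [/\ uniq s, (forall x, A x <-> x \in s) & size s = n].

Definition finite_set (A : U -> Prop) : Prop := exists n, card_is A n.

(* A collection is a sequence of languages indexed by nat (index i stands
   for the paper's L_{i+1}); entries are distinguished by their index. *)
Variable L : nat -> U -> Prop.

Definition inter (s : seq nat) : U -> Prop := fun x => forall d, d \in s -> L d x.

(* Step (1): [pre] lists the original indices of the entries at positions
   1..j-1, and [k] is the entry at position j.  A subcollection D of the
   entries at positions 1..j containing position j is [k :: mask m pre]. *)
Definition chk_val (pre : seq nat) (k : nat) (n : nat) : Prop :=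
  exists m : bitseq, size m = size pre /\ card_is (inter (k :: mask m pre)) n.

Definition mchk (pre : seq nat) (k : nat) : nat :=
  epsilon (inhabits 0%N) (fun n =>
    (chk_val pre k n /\ forall v, chk_val pre k v -> v <= n)
    \/ ((forall v, ~ chk_val pre k v) /\ n = 0%N)).

(* The current collection is
   rev rp ++ k :: suf, with k at position j = size rp + 1.  [ms] gives the
   already-fixed values m^star of entries with smaller original index.
   Returns the new ordering C'_i and m^star(L_k). *)
Fixpoint insert_loop (ms : nat -> nat) (k : nat) (rp suf : seq nat)
  : seq nat * nat :=
  let c := mchk (rev rp) k in
  match rp with
  | [::] => (k :: suf, c)                         (* j <= 1 : stop *)
  | p :: rp' =>
      if ms p < c then (rev rp ++ k :: suf, c)
      else insert_loop ms k rp' (p :: suf)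
  end.

(* The Procedure run for the first i entries: returns C'_i and m^star
   (meaningful on indices < i). *)
Fixpoint proc (i : nat) : seq nat * (nat -> nat) :=
  match i with
  | 0 => ([::], fun _ => 0%N)
  | i'.+1 =>
      let (ord, ms) := proc i' in
      let (ord', c) := insert_loop ms i' (rev ord) [::] in
      (ord', fun j => if j == i' then c else ms j)
  end.

Definition mstar (k : nat) : nat := (proc k.+1).2 k.

(* x : nat -> U enumerates A; x t is the paper's x_{t+1} *)
Definition enumerates (A : U -> Prop) (x : nat -> U) : Prop :=
  (forall t, A (x t)) /\ (forall y, A y -> exists t, x t = y).

Definition prefix (x : nat -> U) (t : nat) : seq U := [seq x s | s <- iota 0 t].

(* An algorithm maps the observed sequence x_1..x_t to z_t. *)
Definition algorithm := seq U -> U.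

Definition gen_with (G : algorithm) (i n : nat) : Prop :=
  forall x, enumerates (L i) x -> forall t, 0 < t ->
    n <= size (undup (prefix x t)) ->
    L i (G (prefix x t)) /\ G (prefix x t) \notin prefix x t.

Definition nonuniform_gen_times (G : algorithm) (T : nat -> nat) : Prop :=
  forall i, gen_with G i (T i).

Definition nonuniform_gen (G : algorithm) : Prop :=
  forall i, exists n, gen_with G i n.

(* t_G(L_i) < b  (t_G = least valid time, infinity if none) *)
Definition tG_lt (G : algorithm) (i b : nat) : Prop :=
  exists n, n < b /\ gen_with G i n.

Definition tG_gt (G : algorithm) (i b : nat) : Prop :=
  forall n, gen_with G i n -> b < n.

Definition pareto_optimal (T : nat -> nat) : Prop :=
  forall G : algorithm, nonuniform_gen G ->
    forall i, tG_lt G i (T i) -> exists j, j <> i /\ tG_gt G j (T j).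

End Defs.

From Pilot Require Import Defs.
From Stdlib Require Import ClassicalEpsilon Classical.
From mathcomp Require Import all_boot.

(* Two properties of the values m* carry the proof.  First, if a finite
   intersection of the languages L_d, d in E, has v elements, then v <= m*(L_d)
   for some d in E: when the largest index e of E was inserted, the other
   members of E lay before e or among the entries e was swapped past.  When e
   was swapped past the first such f, all of E \ {e} still preceded e, so the
   check that allowed the swap ranged over E and was at most m*(L_f); if there
   is no such f, E is among the subcollections defining m*(L_e) itself.  So
   the algorithm that, after n distinct strings, outputs an unseen string
   common to the consistent languages with m* < n (finitely many, by
   hypothesis) never gets stuck, and generates from L_i as soon as
   n > m*(L_i).  Second, a positive m*(L_i) is the size of an intersection of
   L_i with languages of smaller m*; an algorithm faster on L_i and no slower
   on those languages, once shown an enumeration of that intersection, would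
   have to output a new element of it. *)

Set Implicit Arguments.
Unset Strict Implicit.
Unset Printing Implicit Defensive.

Definition classicb (P : Prop) : bool := excluded_middle_informative P.

Lemma classicbP (P : Prop) : reflect P (classicb P).
Proof. exact: sumboolP. Qed.

Lemma ex_max_bounded (P : nat -> Prop) (b : nat) :
  (exists v, P v) -> (forall v, P v -> v <= b) ->
  exists n, P n /\ forall v, P v -> v <= n.
Proof.
move=> [v0 Pv0] le_b.
have exP : exists v, classicb (P v) by exists v0; apply/classicbP.
have ubP v : classicb (P v) -> v <= b by move/classicbP/le_b.
case: (ex_maxnP exP ubP) => n /classicbP Pn max_n.
by exists n; split => // w /classicbP/max_n.
Qed.

Section Procedure.
Variable U : countType.
Variable L : nat -> U -> Prop.

Lemma card_is_unique (A : U -> Prop) n1 n2 : card_is A n1 -> card_is A n2 -> n1 = n2.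
Proof.
move=> [s1 [uniq1 mem1 <-]] [s2 [uniq2 mem2 <-]].
apply/perm_size/uniq_perm => // x.
by apply/idP/idP => [/mem1/mem2 | /mem2/mem1].
Qed.

Lemma eq_card_is (A B : U -> Prop) n :
  (forall x, A x <-> B x) -> card_is A n -> card_is B n.
Proof.
by move=> eqAB [s [uniq_s mem_s size_s]]; exists s; split => // x; rewrite -eqAB.
Qed.

Lemma eq_inter (s1 s2 : seq nat) x : s1 =i s2 -> inter L s1 x <-> inter L s2 x.
Proof.
by move=> eq_s; split => inter_x d; [rewrite -eq_s | rewrite eq_s]; apply: inter_x.
Qed.

Lemma card_inter_mask_bounded (pre base : seq nat) : exists b, forall m v,
  size m = size pre -> card_is (inter L (base ++ mask m pre)) v -> v <= b.
Proof.
elim: pre base => [|p pre IH] base.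
  have [[v0 card_v0] | no_card] := classicbP (exists v, card_is (inter L base) v).
    by exists v0 => m v _; rewrite mask0 cats0 => /card_is_unique/(_ card_v0) ->.
  by exists 0 => m v _; rewrite mask0 cats0 => card_v; case: no_card; exists v.
have [b1 le_b1] := IH (rcons base p); have [b2 le_b2] := IH base.
exists (maxn b1 b2) => [[|[] m]] v //= [size_m] card_v; rewrite leq_max.
  by rewrite (le_b1 m) // cat_rcons.
by rewrite (le_b2 m) ?orbT.
Qed.

Lemma mchk_spec pre k :
  (chk_val L pre k (mchk L pre k) /\ forall v, chk_val L pre k v -> v <= mchk L pre k)
  \/ ((forall v, ~ chk_val L pre k v) /\ mchk L pre k = 0).
Proof.
rewrite /mchk; set P := (X in epsilon _ X); apply: (epsilon_spec _ P).
have [[v chk_v] | no_chk] := classicbP (exists v, chk_val L pre k v); last first.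
  by exists 0; right; split => // v chk_v; apply: no_chk; exists v.
have [b le_b] := card_inter_mask_bounded pre [:: k].
have [n [chk_n max_n]] :
    exists n, chk_val L pre k n /\ forall v, chk_val L pre k v -> v <= n.
  by apply: (ex_max_bounded (ex_intro _ v chk_v)) => w [m [size_m]]; apply: le_b.
by exists n; left.
Qed.

Lemma chk_val_le_mchk pre k v : chk_val L pre k v -> v <= mchk L pre k.
Proof. by case: (mchk_spec pre k) => [[_ /(_ v)] | [/(_ v)]]. Qed.

Lemma mchk_attained pre k : 0 < mchk L pre k -> chk_val L pre k (mchk L pre k).
Proof. by case: (mchk_spec pre k) => [[] | [_ ->]]. Qed.

Lemma chk_val_cat pre ext k v : chk_val L pre k v -> chk_val L (pre ++ ext) k v.
Proof.
move=> [m [size_m card_v]]; exists (m ++ nseq (size ext) false).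
by rewrite !size_cat size_nseq size_m mask_cat // mask_false cats0.
Qed.

Lemma mchk_cat pre ext k : mchk L pre k <= mchk L (pre ++ ext) k.
Proof.
case: (mchk_spec pre k) => [[chk_m _] | [_ ->]] //.
exact/chk_val_le_mchk/chk_val_cat.
Qed.

Lemma chk_val_of_subset pre k (E : seq nat) v :
  k \in E -> {subset E <= k :: pre} -> card_is (inter L E) v -> chk_val L pre k v.
Proof.
move=> kE sub_E card_v.
exists [seq x \in E | x <- pre]; split; first by rewrite size_map.
apply: eq_card_is card_v => x; apply: eq_inter => d.
rewrite -filter_mask inE mem_filter.
case: (eqVneq d k) => [-> // | d_neq_k] /=.
apply/idP/andP => [dE | [] //]; split=> //.
by have := sub_E d dE; rewrite inE (negbTE d_neq_k).
Qed.

Lemma insert_loop_spec (ms : nat -> nat) k rp suf : exists pre jumped,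
  [/\ rev rp = pre ++ jumped,
      insert_loop L ms k rp suf = (pre ++ k :: jumped ++ suf, mchk L pre k),
      (forall A p, pre = rcons A p -> ms p < mchk L pre k) &
      (forall n, n < size jumped ->
         mchk L (pre ++ take n.+1 jumped) k <= ms (nth 0 jumped n))].
Proof.
elim: rp suf => [|p rp IH] suf; first by exists [::], [::]; split => // -[].
rewrite /=; case: ifP => [lt_p | /negbT ge_p].
  exists (rev (p :: rp)), [::]; rewrite cats0; split => // A p'.
  by rewrite rev_cons => /rcons_inj [_ <-]; rewrite -rev_cons.
have [pre [jumped [rev_rp loop_eq last_lt jumped_ge]]] := IH (p :: suf).
exists pre, (rcons jumped p); split => //.
- by rewrite rev_cons rev_rp rcons_cat.
- by rewrite loop_eq cat_rcons.
move=> n; rewrite size_rcons ltnS leq_eqVlt => /orP [/eqP -> | lt_n].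
  rewrite take_oversize ?size_rcons // -rcons_cat -rev_rp -rev_cons nth_rcons ltnn eqxx.
  by rewrite leqNgt.
by rewrite -cats1 takel_cat // nth_cat lt_n; apply: jumped_ge.
Qed.

Lemma proc_succ_spec i : exists pre jumped,
  [/\ (proc L i).1 = pre ++ jumped, (proc L i.+1).1 = pre ++ i :: jumped,
      mstar L i = mchk L pre i,
      (forall A p, pre = rcons A p -> (proc L i).2 p < mstar L i) &
      (forall n, n < size jumped ->
         mchk L (pre ++ take n.+1 jumped) i <= (proc L i).2 (nth 0 jumped n))].
Proof.
have [pre [jumped [ord_eq loop_eq last_lt jumped_ge]]] :=
  insert_loop_spec (proc L i).2 i (rev (proc L i).1) [::].
have mstar_i : mstar L i = mchk L pre i.
  by rewrite /mstar /=; case: (proc L i) loop_eq => ord ms /= ->; rewrite /= eqxx.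
rewrite revK in ord_eq; rewrite -mstar_i in last_lt.
exists pre, jumped; split => //.
by rewrite /=; case: (proc L i) loop_eq => ord ms /= ->; rewrite cats0.
Qed.

Lemma proc_mem i j : (j \in (proc L i).1) = (j < i).
Proof.
elim: i => // i IH; have [pre [jumped [ord_eq ord'_eq _ _ _]]] := proc_succ_spec i.
rewrite ord'_eq ltnS leq_eqVlt -IH ord_eq !mem_cat inE.
by case: (j == i) (j \in pre) (j \in jumped) => [] [] [].
Qed.

Lemma proc_mstar i j : j < i -> (proc L i).2 j = mstar L j.
Proof.
elim: i => // i IH; rewrite ltnS leq_eqVlt => /orP [/eqP -> // | lt_ji].
rewrite /= -(IH lt_ji); case: (proc L i) => ord ms /=.
by case: insert_loop => ord' c /=; rewrite (ltn_eqF lt_ji).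
Qed.

Definition mstar_sorted (s : seq nat) := pairwise (fun a b => mstar L a <= mstar L b) s.

Definition insert_step i (pre jumped : seq nat) : Prop :=
  [/\ (proc L i).1 = pre ++ jumped, (proc L i.+1).1 = pre ++ i :: jumped,
      mstar L i = mchk L pre i, {in pre, forall y, mstar L y < mstar L i} &
      forall n, n < size jumped ->
        mchk L (pre ++ take n.+1 jumped) i <= mstar L (nth 0 jumped n)].

Lemma proc_insert i :
  mstar_sorted (proc L i).1 -> exists pre jumped, insert_step i pre jumped.
Proof.
move=> sorted_ord.
have [pre [jumped [ord_eq ord'_eq mstar_i last_lt jumped_ge]]] := proc_succ_spec i.
have ms_mstar y : y \in pre ++ jumped -> (proc L i).2 y = mstar L y.
  by rewrite -ord_eq proc_mem; apply: proc_mstar.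
exists pre, jumped; split => //; last first.
  by move=> n lt_n; rewrite -ms_mstar ?mem_cat ?mem_nth ?orbT //; apply: jumped_ge.
move=> y; case/lastP E: pre => [// | A p].
have lt_p : mstar L p < mstar L i.
  rewrite -ms_mstar; first exact: last_lt E.
  by rewrite E mem_cat mem_rcons mem_head.
rewrite mem_rcons inE => /orP [/eqP -> // | y_A].
move: sorted_ord; rewrite /mstar_sorted ord_eq E -cats1 !pairwise_cat.
case/and3P=> _ /and3P [/allrelP le_p _ _] _.
exact: leq_ltn_trans (le_p y p y_A (mem_head _ _)) lt_p.
Qed.

Lemma proc_sorted i : mstar_sorted (proc L i).1.
Proof.
elim: i => // i IH.
have [pre [jumped [ord_eq -> mstar_i pre_lt jumped_ge]]] := proc_insert IH.
have ge_jumped : {in jumped, forall y, mstar L i <= mstar L y}.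
  move=> y y_j; have := jumped_ge (index y jumped).
  rewrite index_mem nth_index // => /(_ y_j); apply: leq_trans.
  by rewrite mstar_i mchk_cat.
move: IH; rewrite /mstar_sorted ord_eq !pairwise_cat pairwise_cons.
case/and3P=> le_pre_j sorted_pre sorted_j.
rewrite sorted_pre sorted_j (introT allP ge_jumped) !andbT.
apply/allrelP => a b a_pre; rewrite inE => /orP [/eqP -> | b_j]; first exact/ltnW/pre_lt.
exact: (allrelP le_pre_j).
Qed.

Lemma mstar_insert i : exists pre jumped, insert_step i pre jumped.
Proof. exact/proc_insert/proc_sorted. Qed.

Lemma card_inter_le_mstar (E : seq nat) k v :
  k \in E -> card_is (inter L E) v -> exists2 f, f \in E & v <= mstar L f.
Proof.
move=> kE card_v.
have [e eE max_e] := ex_maxnP (ex_intro (fun x => x \in E) k kE)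
  (fun x xE => @leq_bigmax_seq _ E predT id x xE isT).
have [pre [jumped [ord_eq _ mstar_e _ jumped_ge]]] := mstar_insert e.
have sub_E n : (forall y, y \in jumped -> y \in E -> index y jumped < n) ->
    {subset E <= e :: pre ++ take n jumped}.
  move=> jumped_lt x xE; rewrite inE; case: eqVneq => //= /negbTE x_ne_e.
  have : x \in (proc L e).1 by rewrite proc_mem ltn_neqAle x_ne_e max_e.
  rewrite ord_eq !mem_cat => /orP [-> // | x_j].
  by rewrite in_take // jumped_lt ?orbT.
have [/hasP [y y_j yE] | no_jumped_E] := boolP (has (mem E) jumped); last first.
  exists e => //; rewrite mstar_e; apply/chk_val_le_mchk/(chk_val_of_subset eE _ card_v).
  have := sub_E 0; rewrite take0 cats0; apply=> z z_j zE.
  by case/hasP: no_jumped_E; exists z.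
pose in_E n := (n < size jumped) && (nth 0 jumped n \in E).
have ex_in_E : exists n, in_E n.
  by exists (index y jumped); rewrite /in_E index_mem y_j nth_index.
have in_E_bounded n : in_E n -> n <= size jumped by case/andP=> /ltnW.
have [n /andP [lt_n nE] max_n] := ex_maxnP ex_in_E in_E_bounded.
exists (nth 0 jumped n) => //; apply: leq_trans (jumped_ge _ lt_n).
apply/chk_val_le_mchk/(chk_val_of_subset eE _ card_v)/sub_E => z z_j zE.
by rewrite ltnS max_n // /in_E index_mem z_j nth_index.
Qed.

Lemma mstar_witness i : 0 < mstar L i -> exists D : seq nat,
  [/\ i \in D, card_is (inter L D) (mstar L i) &
      forall d, d \in D -> d != i -> mstar L d < mstar L i].
Proof.
have [pre [_ [_ _ mstar_i pre_lt _]]] := mstar_insert i.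
move=> mstar_pos; have [m [_ card_m]] : chk_val L pre i (mstar L i).
  by rewrite mstar_i; apply: mchk_attained; rewrite -mstar_i.
exists (i :: mask m pre); split; rewrite ?mem_head //.
move=> d; rewrite inE => /orP [/eqP -> | /mem_mask d_pre _]; first by rewrite eqxx.
exact: pre_lt.
Qed.

End Procedure.

Section Generation.
Variable U : countType.
Variable L : nat -> U -> Prop.

Lemma exists_enumeration_prefix (A : U -> Prop) (w : seq U) y0 :
  A y0 -> (forall y, y \in w -> A y) ->
  exists x, enumerates A x /\ Defs.prefix x (size w) = w.
Proof.
move=> A_y0 w_A.
pose e n := if @unpickle U n is Some y then if classicb (A y) then y else y0 else y0.
have e_A n : A (e n).
  by rewrite /e; case: unpickle => // y; case: classicbP.
exists (fun t => if t < size w then nth y0 w t else e (t - size w)); split; first split.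
- by move=> t; case: ifP => // lt_t; apply/w_A/mem_nth.
- move=> y A_y; exists (pickle y + size w).
  by rewrite ltnNge leq_addl addnK /e pickleK; case: classicbP.
rewrite /Defs.prefix -[RHS](mkseq_nth y0); apply/eq_in_map => t.
by rewrite mem_iota => /andP [_ ->].
Qed.

Lemma gen_with_mono (G : algorithm U) i n n' :
  n <= n' -> gen_with L G i n -> gen_with L G i n'.
Proof.
by move=> le_n gen_n x enum_x t t_pos le_n'; apply: gen_n => //; apply: leq_trans le_n'.
Qed.

Lemma gen_with_not_card_inter (G : algorithm U) (D : seq nat) i n :
  (forall d, exists y, L d y) -> i \in D -> 0 < n ->
  (forall d, d \in D -> gen_with L G d n) -> ~ card_is (inter L D) n.
Proof.
move=> nonempty iD n_pos gen_D [w [uniq_w mem_w size_w]].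
have fresh d : d \in D -> L d (G w) /\ G w \notin w.
  move=> dD; have [y0 L_y0] := nonempty d.
  have [x [enum_x prefix_w]] :=
    exists_enumeration_prefix L_y0 (fun y w_y => proj2 (mem_w y) w_y d dD).
  by have := gen_D d dD x enum_x (size w); rewrite prefix_w undup_id // size_w; apply.
have [_ /negP] := fresh i iD; apply; apply/mem_w => d dD.
exact: (fresh d dD).1.
Qed.

(* As t >= 1 forces |S_t| >= 1, the times 0 and 1 are equivalent, and only 0
   can be Pareto-optimal. *)
Definition gen_time (i : nat) : nat :=
  if mstar L i == 0 then 0 else (mstar L i).+1.

Lemma gen_time_pareto : (forall i, exists y, L i y) -> pareto_optimal L gen_time.
Proof.
move=> nonempty G _ i [n [lt_n gen_n]]; apply: NNPP => no_worse.
have gen_j j : j <> i -> gen_with L G j (gen_time j).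
  move=> j_ne_i; apply: NNPP => not_gen; apply: no_worse; exists j; split => // n' gen'.
  by rewrite ltnNge; apply/negP => le'; apply/not_gen/(gen_with_mono le' gen').
have mstar_pos : 0 < mstar L i by move: lt_n; rewrite /gen_time lt0n; case: eqP.
have [D [iD card_D lt_D]] := mstar_witness mstar_pos.
apply: (gen_with_not_card_inter nonempty iD mstar_pos _ card_D) => d dD.
have [-> | d_ne_i] := eqVneq d i.
  by apply: gen_with_mono gen_n; move: lt_n; rewrite /gen_time; case: eqP.
apply: gen_with_mono (gen_j d (elimN eqP d_ne_i)).
by rewrite /gen_time; case: eqP => // _; apply: lt_D.
Qed.

Variables (z0 : U) (bound : nat -> nat).
Hypothesis bound_spec : forall t j, mstar L j < t -> j < bound t.

Definition candidates (s : seq U) : seq nat :=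
  let n := size (undup s) in
  [seq j <- iota 0 (bound n)
     | (mstar L j < n) && classicb (forall y, y \in s -> L j y)].

Definition generator : algorithm U :=
  fun s => epsilon (inhabits z0) (fun z => inter L (candidates s) z /\ z \notin s).

Lemma generator_spec s i :
  mstar L i < size (undup s) -> (forall y, y \in s -> L i y) ->
  L i (generator s) /\ generator s \notin s.
Proof.
move=> lt_i s_L.
have i_cand : i \in candidates s.
  by rewrite mem_filter lt_i mem_iota leq0n bound_spec // !andbT; apply/classicbP.
suff ex_fresh : exists z, inter L (candidates s) z /\ z \notin s.
  have [inter_g g_s] := epsilon_spec (inhabits z0) _ ex_fresh.
  by split => //; apply: inter_g.
apply: NNPP => no_fresh.
have card_s : card_is (inter L (candidates s)) (size (undup s)).
  exists (undup s); split => [|z|//]; first exact: undup_uniq.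
  rewrite mem_undup; split => [inter_z | zs d].
    by apply/negPn/negP => zs; apply: no_fresh; exists z.
  by rewrite mem_filter => /andP [/andP [_ /classicbP s_Ld] _]; apply: s_Ld.
have [f] := card_inter_le_mstar i_cand card_s.
by rewrite mem_filter => /andP [/andP [lt_f _] _]; rewrite leqNgt lt_f.
Qed.

Lemma generator_gen_times : nonuniform_gen_times L generator gen_time.
Proof.
move=> i x [x_L _] t t_pos le_time.
have prefix_pos : 0 < size (undup (Defs.prefix x t)).
  case: t t_pos {le_time} => // t _; rewrite -has_predT; apply/hasP.
  by exists (x 0); rewrite // mem_undup /Defs.prefix /= inE eqxx.
apply: generator_spec; last by move=> y /mapP [s _ ->].
by move: le_time; rewrite /gen_time; case: eqP => [-> |].
Qed.

End Generation.

Theorem mainTheorem3 (U : countType) (L : nat -> U -> Prop) :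
  (exists f : nat -> U, injective f) ->
  (forall i, ~ finite_set (L i)) ->
  (forall t, exists N, forall j, mstar L j + 1 <= t -> j < N) ->
  exists (G : algorithm U) (T : nat -> nat),
    nonuniform_gen_times L G T /\ pareto_optimal L T.
Proof.
move=> [f _] infinite bounded.
have nonempty i : exists y, L i y.
  apply: NNPP => empty; apply: (infinite i); exists 0, [::]; split => // y.
  by split => // L_y; case: empty; exists y.
have [bound bound_spec] := choice _ bounded.
have lt_bound t j : mstar L j < t -> j < bound t by rewrite -addn1; apply: bound_spec.
exists (generator L (f 0) bound), (gen_time L); split.
- exact: generator_gen_times lt_bound.
- exact: gen_time_pareto.
Qed.
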